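(* Let $(S,\mathscr{S})$ be a measurable space, $n\le N$, and $X=(X_1,\ldots,X_n)$ an exchangeable random element of $S^n$. If $X$ is $N$-extendible, then $\|\mathcal E^N_n\|=1$, where \[ \|\mathcal E^N_n\|:=\sup\Big\{|\mathbb{E}\,g(X_1,\ldots,X_n)|: g:S^n\to\mathbb{R}\text{ bounded measurable},\ |U^N_ng(x)|\le1\ \forall x\in S^N\Big\}. \]
   Context: $X$ is exchangeable if its law is invariant under all permutations of coordinates; $X$ is $N$-extendible if there is an exchangeable random element $(Y_1,\ldots,Y_N)$ of $S^N$ with $(Y_1,\ldots,Y_n)$ equal in distribution to $X$. With $\mathfrak S[n,N]$ the set of injections $\{1,\ldots,n\}\to\{1,\ldots,N\}$ and $(N)_n=N(N-1)\cdots(N-n+1)$, $U^N_ng(x_1,\ldots,x_N)=\frac1{(N)_n}\sum_{\sigma\in\mathfrak S[n,N]}g(x_{\sigma(1)},\ldots,x_{\sigma(n)})$. *)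

From HB Require Import structures.
From mathcomp Require Import all_boot all_order all_algebra all_fingroup.
From mathcomp Require Import all_classical all_reals all_analysis.

Set Implicit Arguments.
Unset Strict Implicit.
Unset Printing Implicit Defensive.

Import Order.TTheory GRing.Theory Num.Theory.
Local Open Scope classical_set_scope.
Local Open Scope ring_scope.

(* S^n is modelled as n.-tuple S, with MathComp-Analysis' product sigma-algebra
   (generated by the coordinate projections). *)

Definition tperm_coord {S : Type} (n : nat) (s : 'S_n) (x : n.-tuple S)
  : n.-tuple S := [tuple tnth x (s i) | i < n].

Definition tfirst {S : Type} (n N : nat) (hnN : (n <= N)%N) (y : N.-tuple S)
  : n.-tuple S := [tuple tnth y (widen_ord hnN i) | i < n].

Definition exchangeable {d dS} {Omega : measurableType d} {R : realType}
  {S : measurableType dS} (n : nat) (P : probability Omega R)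
  (X : Omega -> n.-tuple S) : Prop :=
  forall (s : 'S_n) (A : set (n.-tuple S)), measurable A ->
    P ((fun w => tperm_coord s (X w)) @^-1` A) = P (X @^-1` A).

Definition extendible {d dS} {Omega : measurableType d} {R : realType}
  {S : measurableType dS} (n N : nat) (hnN : (n <= N)%N)
  (P : probability Omega R) (X : Omega -> n.-tuple S) : Prop :=
  exists (d' : measure_display) (Omega' : measurableType d')
         (Q : probability Omega' R) (Y : Omega' -> N.-tuple S),
    measurable_fun setT Y /\ exchangeable Q Y /\
    forall A : set (n.-tuple S), measurable A ->
      Q ((fun w => tfirst hnN (Y w)) @^-1` A) = P (X @^-1` A).

Definition U_op {S : Type} {R : realType} (n N : nat)
  (g : n.-tuple S -> R) (x : N.-tuple S) : R :=
  (\sum_(sg : {ffun 'I_n -> 'I_N} | injectiveb sg)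
      g [tuple tnth x (sg i) | i < n]) / (N ^_ n)%:R.

Definition E_norm {d dS} {Omega : measurableType d} {R : realType}
  {S : measurableType dS} (n N : nat) (P : probability Omega R)
  (X : Omega -> n.-tuple S) : \bar R :=
  ereal_sup [set `| \int[P]_w (g (X w))%:E |%E | g in
    [set g : n.-tuple S -> R |
      measurable_fun setT g /\ (exists M : R, forall x, `|g x| <= M) /\
      (forall x : N.-tuple S, `|U_op g x| <= 1)]].

From HB Require Import structures.
From mathcomp Require Import all_boot all_order all_algebra all_fingroup.
From mathcomp Require Import all_classical all_reals all_analysis.
From mathcomp Require Import measurable_realfun.

(** Let Y be an exchangeable extension of X. For every injection sg of
    {1..n} into {1..N}, (Y_sg(1), ..., Y_sg(n)) is a coordinate permutation of
    Y followed by truncation to the first n coordinates, so it has the law of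
    X. Averaging over sg gives E g(X) = E (U^N_n g)(Y), hence |E g(X)| <= 1
    whenever |U^N_n g| <= 1. The constant g = 1 attains the bound. *)

Set Implicit Arguments.
Unset Strict Implicit.
Unset Printing Implicit Defensive.

Import Order.TTheory GRing.Theory Num.Theory.
Local Open Scope classical_set_scope.
Local Open Scope ring_scope.

Lemma perm_extend_injective n N (hnN : (n <= N)%N) (f : 'I_n -> 'I_N) :
  injective f -> exists s : 'S_N, forall i, s (widen_ord hnN i) = f i.
Proof.
move=> f_inj.
set s := map f (enum 'I_n) ++ [seq j <- enum 'I_N | j \notin codom f].
have s_uniq : uniq s.
  rewrite cat_uniq map_inj_uniq // enum_uniq filter_uniq ?enum_uniq // andbT.
  by apply/hasPn => j; rewrite mem_filter -codomE => /andP[].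
have s_all j : j \in s.
  by rewrite mem_cat mem_filter mem_enum andbT codomE orbN.
have size_s : size s = N.
  rewrite (perm_size (uniq_perm s_uniq (enum_uniq 'I_N) _)) ?size_enum_ord //.
  by move=> j; rewrite s_all mem_enum.
pose g (j : 'I_N) := nth j s j.
have g_inj : injective g.
  move=> j1 j2 eq_g; apply/val_inj/eqP.
  rewrite -(nth_uniq j1 _ _ s_uniq) ?size_s ?ltn_ord //.
  by apply/eqP; rewrite [RHS](set_nth_default j2) ?size_s ?ltn_ord.
exists (perm g_inj) => i.
rewrite permE /g nth_cat size_map size_enum_ord /= ltn_ord.
rewrite (set_nth_default (f i)) ?size_map -?enumT ?size_enum_ord //.
by rewrite (nth_map i) ?nth_ord_enum // size_enum_ord.
Qed.

Lemma bounded_integrable d (T : measurableType d) (R : realType)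
    (mu : {finite_measure set T -> \bar R}) (h : T -> R) :
  measurable_fun setT h -> (exists M : R, forall x, `|h x| <= M) ->
  mu.-integrable setT (EFin \o h).
Proof.
move=> mh [M hM]; apply: measurable_bounded_integrable => //.
  exact: fin_num_fun_lty (@fin_num_measure _ _ _ mu).
exists M; split; first by rewrite num_real.
by move=> z Mz x _; exact: le_trans (hM x) (ltW Mz).
Qed.

Lemma integral_eq_law d1 d2 dT (O1 : measurableType d1) (O2 : measurableType d2)
    (T : measurableType dT) (R : realType) (P1 : probability O1 R)
    (P2 : probability O2 R) (f1 : O1 -> T) (f2 : O2 -> T) (g : T -> R) :
  measurable_fun setT f1 -> measurable_fun setT f2 -> measurable_fun setT g ->
  (exists M : R, forall x, `|g x| <= M) ->
  (forall A, measurable A -> P1 (f1 @^-1` A) = P2 (f2 @^-1` A)) ->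
  (\int[P1]_w (g (f1 w))%:E = \int[P2]_w (g (f2 w))%:E)%E.
Proof.
move=> mf1 mf2 mg gbd law.
have mEg : measurable_fun [set: T] (EFin \o g) by exact/measurable_EFinP.
have int_comp d' (O : measurableType d') (Pr : probability O R) (f : O -> T) :
    measurable_fun setT f -> Pr.-integrable (f @^-1` setT) ((EFin \o g) \o f).
  move=> mf; rewrite preimage_setT; apply: (@bounded_integrable _ _ _ _ (g \o f)).
    exact: measurableT_comp.
  by case: gbd => M hM; exists M => x; exact: hM.
have := integral_pushforward mf1 mEg (int_comp _ _ _ _ mf1) measurableT.
have := integral_pushforward mf2 mEg (int_comp _ _ _ _ mf2) measurableT.
rewrite !preimage_setT => <- <-.
by apply: eq_measure_integral => A mA _; exact: law.
Qed.

Lemma abse_integral_le1 d (T : measurableType d) (R : realType)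
    (P : probability T R) (f : T -> R) :
  measurable_fun setT f -> (forall x, `|f x| <= 1) ->
  (`|\int[P]_w (f w)%:E| <= 1)%E.
Proof.
move=> mf f_le1; have mEf : measurable_fun setT (EFin \o f).
  exact/measurable_EFinP.
apply: le_trans (le_abse_integral _ measurableT mEf) _.
apply: le_trans (integral_le_bound 1%E measurableT mEf _ _) _ => //.
  by apply: aeW => w _; rewrite /= lee_fin.
by rewrite mul1e; exact: probability_le1.
Qed.

Lemma sum_injective_ffun_const (V : nmodType) n N (c : V) :
  \sum_(f : {ffun 'I_n -> 'I_N} | injectiveb f) c = c *+ (N ^_ n).
Proof.
rewrite -big_set /= sumr_const; congr (_ *+ _).
by have := card_inj_ffuns 'I_n 'I_N; rewrite !card_ord.
Qed.

Definition tsel {S : Type} n N (f : 'I_n -> 'I_N) (y : N.-tuple S) : n.-tuple S :=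
  [tuple tnth y (f i) | i < n].

Lemma tsel_comp {S : Type} m n N (f : 'I_m -> 'I_n) (g : 'I_n -> 'I_N)
    (y : N.-tuple S) :
  tsel f (tsel g y) = tsel (g \o f) y.
Proof. by apply: eq_from_tnth => i; rewrite !tnth_mktuple. Qed.

Lemma measurable_tsel dS (S : measurableType dS) n N (f : 'I_n -> 'I_N) :
  measurable_fun setT (@tsel S n N f).
Proof.
apply/measurable_fun_tnthP => i.
rewrite (_ : _ \o _ = fun y => tnth y (f i)); first exact: measurable_tnth.
by apply/funext => y; rewrite /= tnth_mktuple.
Qed.

Lemma measurable_U_op dS (S : measurableType dS) (R : realType) n N
    (g : n.-tuple S -> R) :
  measurable_fun setT g -> measurable_fun setT (@U_op S R n N g).
Proof.
move=> mg; rewrite /U_op; under eq_fun do rewrite big_mkcond /=.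
apply: measurable_funM => //; apply: measurable_sum => f.
case: (injectiveb f); last exact: measurable_cst.
exact: (measurableT_comp mg (measurable_tsel f)).
Qed.

Lemma U_op_cst (S : Type) (R : realType) n N (c : R) (x : N.-tuple S) :
  (n <= N)%N -> U_op (fun _ : n.-tuple S => c) x = c.
Proof.
move=> hnN; rewrite /U_op sum_injective_ffun_const -(mulr_natr c) mulfK //.
by rewrite pnatr_eq0 -lt0n ffact_gt0.
Qed.

Section ExchangeableExtension.
Variables (d dS d' : measure_display) (Omega : measurableType d)
  (Omega' : measurableType d') (R : realType) (S : measurableType dS).
Variables (P : probability Omega R) (Q : probability Omega' R).
Variables (n N : nat) (hnN : (n <= N)%N).
Variables (X : Omega -> n.-tuple S) (Y : Omega' -> N.-tuple S).
Hypotheses (mX : measurable_fun setT X) (mY : measurable_fun setT Y).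
Hypothesis exY : exchangeable Q Y.
Hypothesis lawY : forall A : set (n.-tuple S), measurable A ->
  Q ((fun w => tfirst hnN (Y w)) @^-1` A) = P (X @^-1` A).

Lemma law_tsel_injective (f : 'I_n -> 'I_N) (A : set (n.-tuple S)) :
  injective f -> measurable A -> Q ((tsel f \o Y) @^-1` A) = P (X @^-1` A).
Proof.
move=> f_inj mA; have [s sE] := perm_extend_injective hnN f_inj.
have -> : tsel f \o Y = tfirst hnN \o (fun w => tperm_coord s (Y w)).
  apply/funext => w; rewrite /= [RHS]tsel_comp.
  by apply: eq_from_tnth => i; rewrite !tnth_mktuple /= sE.
have mA' : measurable (tfirst hnN @^-1` A).
  by rewrite -[X in measurable X]setTI; exact: (measurable_tsel (widen_ord hnN)).
by rewrite comp_preimage exY // -comp_preimage; exact: lawY.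
Qed.

Lemma expectation_U_op (g : n.-tuple S -> R) :
  measurable_fun setT g -> (exists M : R, forall x, `|g x| <= M) ->
  (\int[Q]_w (U_op g (Y w))%:E = \int[P]_w (g (X w))%:E)%E.
Proof.
move=> mg [M gM].
have int_sel f : Q.-integrable setT (fun w => (g (tsel f (Y w)))%:E).
  apply: (@bounded_integrable _ _ _ _ (fun w => g (tsel f (Y w)))); last by exists M.
  exact: measurableT_comp (measurableT_comp (measurable_tsel f) mY).
have -> : (fun w => (U_op g (Y w))%:E) = (fun w =>
    ((N ^_ n)%:R^-1)%:E * \sum_(f : {ffun 'I_n -> 'I_N} | injectiveb f)
      (g (tsel f (Y w)))%:E)%E.
  by apply/funext => w; rewrite /U_op sumEFin -EFinM mulrC.
rewrite integralZl //; last exact: integrable_sum.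
rewrite integral_sum //.
under eq_bigr => f /injectiveP f_inj.
  rewrite (integral_eq_law (P2 := P) (f2 := X)) //; first over.
  - exact: measurableT_comp (measurable_tsel f) mY.
  - by exists M.
  - by move=> A mA; exact: law_tsel_injective.
have /(integrable_fin_num measurableT) : P.-integrable setT (fun w => (g (X w))%:E).
  apply: (@bounded_integrable _ _ _ _ (g \o X)); last by exists M => w; exact: gM.
  exact: measurableT_comp.
case: (\int[P]_w _)%E => // r _.
rewrite sumEFin sum_injective_ffun_const -EFinM -(mulr_natr r) mulrC mulfK //.
by rewrite pnatr_eq0 -lt0n ffact_gt0.
Qed.

End ExchangeableExtension.

Theorem lemma7 (d dS : measure_display) (Omega : measurableType d)
  (R : realType) (S : measurableType dS) (P : probability Omega R)
  (n N : nat) (hnN : (n <= N)%N) (X : Omega -> n.-tuple S) :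
  measurable_fun setT X ->
  exchangeable P X ->
  extendible hnN P X ->
  E_norm N P X = 1%E.
Proof.
move=> mX _ [dQ [OmegaQ [Q [Y [mY [exY lawY]]]]]].
apply: le_anti; apply/andP; split.
- apply: ge_ereal_sup => _ [g [mg [gbd Ug]] <-].
  rewrite -(expectation_U_op mX mY exY lawY mg gbd).
  apply: abse_integral_le1 => [|w]; last exact: Ug.
  exact: measurableT_comp (measurable_U_op mg) mY.
- apply: ereal_sup_ubound; exists (fun _ => 1).
    split; first exact: measurable_cst.
    split; first by exists 1 => x; rewrite normr1.
    by move=> x; rewrite U_op_cst // normr1.
  rewrite integral_cst // mul1e.
  by rewrite -[RHS]abse1; congr (`|_|%E); exact: probability_setT.
Qed.
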